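(* If a fragment $F$ was in the work state and remained active in wait state, it will enter the work state again only after each and every one of its neighboring fragments has been in the work state as well.
   Context: A broadcast network is modeled as a connected graph G(V,E) with n nodes. In the fragment-level leader election algorithm, nodes are partitioned into fragments each with a candidate; id(F) = (size, candidate identity) ordered lexicographically; an external edge between F1 and F2 with id(F1) > id(F2) is outgoing for F1 and incoming for F2. Initially each node is a size-1 fragment in state wait. A fragment with an outgoing edge is in wait; a fragment in wait whose external edges are all incoming moves to work, counts its size new_size and compares with its maximal neighbor F': if new_size > X · size(F') (X > 1) it remains active, updates its size, all of its external edges become outgoing, and it goes to wait; otherwise it joins F' (edges to F' become internal). A fragment with no external edges is the leader. While in wait a fragment does nothing; its edges change only through neighbors' actions (joining it or changing their size). *)

From HB Require Import structures.
From mathcomp Require Import all_boot all_order all_algebra.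
Set Implicit Arguments. Unset Strict Implicit. Unset Printing Implicit Defensive.
Import Order.TTheory GRing.Theory Num.Theory.

Inductive fstate := Wait | Work | Leader.

Section Model.
Variables (V : finType).

(* A configuration: every node points to the candidate of its fragment;
   fragments are identified by their candidate node.  The stored size and
   the state of a fragment are read at its candidate. *)
Record config := Config {
  cand  : V -> V;
  fsize : V -> nat;
  fst   : V -> fstate }.

Definition upd {A : Type} (h : V -> A) (x : V) (a : A) : V -> A :=
  fun y => if y == x then a else h y.

Variable ident : V -> nat.
Variable adj : rel V.

Definition is_frag (c : config) (f : V) : bool := cand c f == f.

Definition members (c : config) (f : V) : {set V} := [set v | cand c v == f].

Definition lt_id (c : config) (f g : V) : bool :=
  (fsize c f < fsize c g)%N ||
  ((fsize c f == fsize c g) && (ident f < ident g)%N).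

Definition neighbor (c : config) (f g : V) : bool :=
  [&& is_frag c f, is_frag c g, f != g &
      [exists u, exists v, [&& cand c u == f, cand c v == g & adj u v]]].

Definition has_ext (c : config) (f : V) : Prop := exists g, neighbor c f g.

Definition all_incoming (c : config) (f : V) : Prop :=
  forall g, neighbor c f g -> lt_id c f g.

Definition max_neighbor (c : config) (f g : V) : Prop :=
  neighbor c f g /\ forall h, neighbor c f h -> h != g -> lt_id c h g.

Definition init_config : config :=
  Config (fun v => v) (fun _ => 1%N) (fun _ => Wait).

Variables (R : realFieldType) (X : R).

Inductive step (c : config) : config -> Prop :=
  | step_wake f :
      is_frag c f -> fst c f = Wait -> has_ext c f -> all_incoming c f ->
      step c (Config (cand c) (fsize c) (upd (fst c) f Work))
  | step_leader f :
      is_frag c f -> fst c f = Wait -> ~ has_ext c f ->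
      step c (Config (cand c) (fsize c) (upd (fst c) f Leader))
  | step_active f g :
      is_frag c f -> fst c f = Work -> max_neighbor c f g ->
      (X * (fsize c g)%:R < (#|members c f|)%:R)%R ->
      step c (Config (cand c) (upd (fsize c) f #|members c f|)
                     (upd (fst c) f Wait))
  | step_join f g :
      is_frag c f -> fst c f = Work -> max_neighbor c f g ->
      ~~ (X * (fsize c g)%:R < (#|members c f|)%:R)%R ->
      step c (Config (fun v => if cand c v == f then g else cand c v)
                     (fsize c) (fst c)).

End Model.

(* When F stays active, its stored size becomes |F| > X * size(F') >= size(H)
   for every neighbour H, so each edge to a neighbour is outgoing for F.
   As long as H does not work, no step changes the sizes of F and H, both stay
   fragments, and merges of other fragments cannot remove the edge between
   them; hence F can never leave the wait state before H has worked. *)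
From HB Require Import structures.
From mathcomp Require Import all_boot all_order all_algebra.
Import Order.TTheory GRing.Theory Num.Theory.
From Stdlib Require Import Classical.

Set Implicit Arguments.
Unset Strict Implicit.

Section Blocking.

Variables (R : realFieldType) (X : R) (V : finType).
Variables (ident : V -> nat) (adj : rel V).

Local Notation step := (step ident adj X).

Definition working (c : config V) (g : V) : Prop :=
  is_frag c g /\ fst c g = Work.

Definition blocked_by (c : config V) (f h : V) : Prop :=
  [/\ neighbor adj c f h, (fsize c h < fsize c f)%N & fst c f <> Work].

Lemma blocked_by_not_all_incoming (c : config V) (f h : V) :
  blocked_by c f h -> ~ all_incoming ident adj c f.
Proof.
case=> nbr lt_hf _ /(_ h nbr) /orP [lt_fh|/andP [/eqP eq_fh _]].
- by move: lt_hf; rewrite ltnNge (ltnW lt_fh).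
- by move: lt_hf; rewrite eq_fh ltnn.
Qed.

Lemma neighbor_merge (c : config V) (g g' f h : V) :
  g != f -> g != h -> neighbor adj c f h ->
  neighbor adj (Config (fun v => if cand c v == g then g' else cand c v)
                       (fsize c) (fst c)) f h.
Proof.
move=> gf gh; rewrite /neighbor /is_frag /=.
have [fg hg] : (f == g) = false /\ (h == g) = false.
  by rewrite !(eq_sym _ g) (negbTE gf) (negbTE gh).
case/and4P => /eqP cf /eqP ch fh /existsP [u /existsP [v /and3P [cu cv uv]]].
rewrite cf ch fg hg !eqxx fh /=.
apply/existsP; exists u; apply/existsP; exists v.
by rewrite (eqP cu) (eqP cv) fg hg !eqxx.
Qed.

Lemma blocked_by_step (c c' : config V) (f h : V) :
  step c c' -> ~ working c h -> blocked_by c f h -> blocked_by c' f h.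
Proof.
move=> st idle_h blocked; have [nbr lt_hf not_work] := blocked.
have other (g : V) : working c g -> (g != f) && (g != h).
  move=> work_g; apply/andP; split; apply/eqP => eq_g.
  - by apply: not_work; rewrite -eq_g; case: work_g.
  - by apply: idle_h; rewrite -eq_g.
case: c' / st.
- move=> g _ _ _ incoming_g; split => //=; rewrite /upd.
  case: (f =P g) => [eq_fg|//].
  by case: (blocked_by_not_all_incoming blocked); rewrite eq_fg.
- by move=> g _ _ _; split => //=; rewrite /upd; case: (f =P g).
- move=> g g' frag_g work_g _ _.
  have /andP [gf gh] := other g (conj frag_g work_g).
  by split => //=; rewrite /upd ?(eq_sym f) ?(eq_sym h) (negbTE gf) ?(negbTE gh).
- move=> g g' frag_g work_g _ _.
  have /andP [gf gh] := other g (conj frag_g work_g).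
  by split => //; apply: neighbor_merge.
Qed.

Lemma max_neighbor_fsize (c : config V) (f g h : V) :
  max_neighbor ident adj c f g -> neighbor adj c f h ->
  (fsize c h <= fsize c g)%N.
Proof.
case=> _ maxg nbr; have [->|hg] := eqVneq h g; first exact: leqnn.
by case/orP: (maxg h nbr hg) => [/ltnW|/andP [/eqP ->]].
Qed.

Lemma blocked_by_activation (c c' : config V) (f h : V) :
  (1 <= X)%R -> step c c' -> fst c f = Work -> fst c' f = Wait ->
  neighbor adj c f h -> blocked_by c' f h.
Proof.
move=> X_ge1 st work_f wait_f nbr.
have hf : (h == f) = false by apply/negbTE; rewrite eq_sym; case/and4P: nbr.
case: c' / st wait_f => /=.
- by move=> g _ _ _ _; rewrite /upd; case: (f =P g); rewrite ?work_f.
- by move=> g _ _ _; rewrite /upd; case: (f =P g); rewrite ?work_f.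
- move=> g g' _ _ max_g' size_gt; rewrite /upd; case: (f =P g) => [eq_fg _|_];
    last by rewrite work_f.
  subst g; split => //=; last by rewrite eqxx.
  rewrite eqxx (ifF _ _ hf).
  apply: leq_ltn_trans (max_neighbor_fsize max_g' nbr) _.
  rewrite -(ltr_nat R); apply: le_lt_trans size_gt.
  by rewrite ler_peMl.
- by move=> g g' _ _ _ _; rewrite work_f.
Qed.

Lemma blocked_by_trace (e : nat -> config V) (a b : nat) (f h : V) :
  (forall i, (a <= i < b)%N -> step (e i) (e i.+1)) ->
  (forall i, (a <= i < b)%N -> ~ working (e i) h) ->
  (a <= b)%N -> blocked_by (e a) f h -> blocked_by (e b) f h.
Proof.
elim: b => [|b IH] steps idle; first by rewrite leqn0 => /eqP <-.
rewrite leq_eqVlt ltnS => /orP [/eqP <- //|le_ab blocked].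
have in_range : (a <= b < b.+1)%N by rewrite le_ab ltnSn.
apply: blocked_by_step (steps b in_range) (idle b in_range) _.
apply: IH le_ab blocked => i /andP [le_ai lt_ib].
- by apply: steps; rewrite le_ai ltnS ltnW.
- by apply: idle; rewrite le_ai ltnS ltnW.
Qed.

End Blocking.

Theorem lemma3 (R : realFieldType) (X : R) (hX : (1 < X)%R)
  (V : finType) (ident : V -> nat) (hid : injective ident)
  (adj : rel V) (hsym : symmetric adj) (hirr : irreflexive adj)
  (hconn : forall u v, connect adj u v)
  (e : nat -> config V) (t1 t2 : nat)
  (h0 : e 0%N = init_config V)
  (hstep : forall i, (i < t2)%N -> step ident adj X (e i) (e i.+1))
  (f : V)
  (hwork1 : is_frag (e t1) f /\ fst (e t1) f = Work)
  (hactive : is_frag (e t1.+1) f /\ fst (e t1.+1) f = Wait)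
  (ht : (t1 < t2)%N)
  (hwork2 : is_frag (e t2) f /\ fst (e t2) f = Work) :
  forall h, neighbor adj (e t1) f h ->
    exists s, [/\ (t1 < s < t2)%N, is_frag (e s) h & fst (e s) h = Work].
Proof.
move=> h nbr; apply: NNPP => never_works.
have idle i : (t1 < i < t2)%N -> ~ working (e i) h.
  by move=> range [frag_h work_h]; apply: never_works; exists i; split.
have blocked : blocked_by adj (e t1.+1) f h.
  exact: blocked_by_activation (ltW hX) (hstep t1 ht) hwork1.2 hactive.2 nbr.
have [_ _ not_work] : blocked_by adj (e t2) f h.
  apply: blocked_by_trace ht blocked => i /andP [lt_t1i lt_it2].
  - exact: hstep.
  - by apply: idle; rewrite lt_t1i.
exact: not_work hwork2.2.
Qed.
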